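(* Fix $i$. Suppose the following hold. (C1) $\varepsilon_{it}=g_i(\mathcal{F}_{it})$ with $\mathcal{F}_{it}=(\dots,\eta_{i,t-1},\eta_{it})$, $\eta_{it}$ i.i.d. across $t$, $g_i$ measurable, $\mathbb{E}[\varepsilon_{it}]=0$ and $\|\varepsilon_{it}\|_q\le C<\infty$ for some $q>4$. (C3) $\sum_{s\ge0}\delta_q(g_i,s)<\infty$ and $\sum_{s\ge t}\delta_q(g_i,s)=O(t^{-\gamma}(\log t)^{-A})$ with $A>\frac23(1/q+1+\gamma)$ and $\gamma=\{q^2-4+(q-2)\sqrt{q^2+20q+4}\}/(8q)$. (C4) For $1\le j\le d$, $X_{it,j}=h_{ij}(\mathcal{G}_{it,j})$ with $\mathcal{G}_{it,j}=(\dots,\xi_{i,t-1,j},\xi_{it,j})$, $\xi_{it,j}$ i.i.d. across $t$, $h_{ij}$ measurable, $\mathbb{E}[X_{it,j}]=0$ and $\|X_{it,j}\|_{q'}<\infty$, where $q'>\max\{4,\theta q\}$ for a fixed constant $\theta>0$. (C6) For all $j$, $\sum_{s\ge0}\delta_{q'}(h_{ij},s)<\infty$ and $\sum_{s\ge t}\delta_{q'}(h_{ij},s)=O(t^{-\alpha})$ for some $\alpha>1/2-1/q'$. Define $\mathbf{a}_i(\mathcal{H}_{it})=\Delta\mathbf{X}_{it}\Delta\varepsilon_{it}$ with components $a_{ij}$, and $\mathbf{b}_i(\mathcal{G}_{it})=\Delta\mathbf{X}_{it}\Delta\mathbf{X}_{it}^\top$ with entries $b_{ikl}$, where $\Delta\mathbf{X}_{it}=\mathbf{X}_{it}-\mathbf{X}_{i,t-1}$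 and $\Delta\varepsilon_{it}=\varepsilon_{it}-\varepsilon_{i,t-1}$. Then for all $j,k,l\in\{1,\dots,d\}$: \[ \sum_{s=t}^\infty\delta_p(a_{ij},s)=O(t^{-\alpha_1})\ \text{for } p=\min\{q,q'\}/2 \text{ and some } \alpha_1>1/2-1/p, \] \[ \sum_{s=t}^\infty\delta_p(b_{ikl},s)=O(t^{-\alpha_2})\ \text{for } p=q'/2 \text{ and some } \alpha_2>1/2-1/p. \]
   Context: Physical dependence measure: for i.i.d. innovations $\zeta_t$, $\mathcal{F}_t=(\dots,\zeta_{t-1},\zeta_t)$ and measurable $g$, $\delta_q(g,t)=\|g(\mathcal{F}_t)-g(\mathcal{F}_t')\|_q$, where $\mathcal{F}_t'$ is $\mathcal{F}_t$ with $\zeta_0$ replaced by an independent copy $\zeta_0'$; $\|V\|_q=(\mathbb{E}|V|^q)^{1/q}$. The component $a_{ij}$ is regarded as a function of $\mathcal{H}_{it,j}=(\dots,\nu_{i,t-1,j},\nu_{it,j})$ with joint innovations $\nu_{it,j}=(\eta_{it},\xi_{it,j})$, and $b_{ikl}$ as a function of $\mathcal{G}_{it}=(\mathcal{G}_{it,1},\dots,\mathcal{G}_{it,d})$; their physical dependence measures are computed with respect to these innovation sequences (replacing the time-$0$ innovation by an independent copy). *)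

From HB Require Import structures.
From mathcomp Require Import all_boot all_order all_algebra.
From mathcomp Require Import all_classical all_reals all_analysis.
Set Implicit Arguments. Unset Strict Implicit. Unset Printing Implicit Defensive.
Import Order.TTheory GRing.Theory Num.Theory.
Import numFieldNormedType.Exports.
Local Open Scope classical_set_scope.
Local Open Scope ring_scope.

Definition mutually_independent {d d'} {Omega : measurableType d}
  {U : measurableType d'} {R : realType} (P : probability Omega R)
  {I : eqType} (X : I -> Omega -> U) : Prop :=
  (forall i, measurable_fun setT (X i)) /\
  forall (J : seq I) (B : I -> set U), uniq J -> (forall i, measurable (B i)) ->
    P (\big[setI/setT]_(i <- J) (X i @^-1` B i)) =
    (\prod_(i <- J) P (X i @^-1` B i))%E.

Definition identically_distributed {d d'} {Omega : measurableType d}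
  {U : measurableType d'} {R : realType} (P : probability Omega R)
  {I : Type} (X : I -> Omega -> U) : Prop :=
  forall i j (B : set U), measurable B -> P (X i @^-1` B) = P (X j @^-1` B).

(** A history (..., z_{t-1}, z_t) is encoded as w : nat -> U with w s = z_{t-s}.
    The sigma-algebra on histories is the product (cylinder) sigma-algebra,
    generated by the coordinate maps. *)
Definition coord_sets {d'} (U : measurableType d') : set (set (nat -> U)) :=
  fun C => exists (s : nat) (A : set U), measurable A /\ C = (fun w => w s) @^-1` A.

Definition hist_measurable {d'} {U : measurableType d'} {R : realType}
  (g : (nat -> U) -> R) : Prop :=
  forall B : set R, measurable B -> <<s (@coord_sets _ U) >> (g @^-1` B).

Definition hist {Omega U : Type} (zeta : int -> Omega -> U) (t : int) (w : Omega)
  : nat -> U := fun s => zeta (t - s%:Z) w.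

(** F_t' : F_t with zeta_0 replaced by the independent copy zeta0' *)
Definition hist' {Omega U : Type} (zeta : int -> Omega -> U) (zeta0' : Omega -> U)
  (t : int) (w : Omega) : nat -> U :=
  fun s => if t - s%:Z == 0 then zeta0' w else zeta (t - s%:Z) w.

Definition hshift {U : Type} (w : nat -> U) : nat -> U := fun s => w s.+1.

Definition physdep {d d'} {Omega : measurableType d} {U : measurableType d'}
  {R : realType} (P : probability Omega R) (zeta : int -> Omega -> U)
  (zeta0' : Omega -> U) (p : R) (G : (nat -> U) -> R) (t : nat) : \bar R :=
  Lnorm P p%:E (fun w => (G (hist zeta t%:Z w) - G (hist' zeta zeta0' t%:Z w))%:E).

Definition tail_bigO {R : realType} (delta : nat -> \bar R) (rate : nat -> R) : Prop :=
  exists (C : R) (N : nat), forall t : nat, (N <= t)%N ->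
    (\sum_(t <= s <oo) delta s <= (C * rate t)%:E)%E.

From HB Require Import structures.
From mathcomp Require Import all_boot all_order all_algebra.
From mathcomp Require Import all_classical all_reals all_analysis.
From mathcomp Require Import measurable_realfun ring lra.
Import Order.TTheory GRing.Theory Num.Theory.
Import numFieldNormedType.Exports.
Local Open Scope classical_set_scope.
Local Open Scope ring_scope.

(* The coupling difference of a product of increments splits as
   u1 v1 - u2 v2 = (u1 - u2) v1 + u2 (v1 - v2). By Hoelder in L^(2p), each term is
   bounded by the L^(2p) norm of an increment of one factor times
   delta(s) + delta(s - 1) for the other factor. The moments of the increments are
   bounded uniformly in time: for the original history by stationarity of the
   innovations, for the coupled one by comparing it with the original at the cost of
   the (summable) dependence measures. Summing over s >= t, both tails are
   O(t^(-alpha1)) with alpha1 = min(alpha, 1/2): the logarithmic rate of eps is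
   absorbed because gamma >= 1/2, and alpha1 > 1/2 - 1/p because 2p <= q'. *)

Section history_space.
Context {dV : measure_display} {V : measurableType dV}.
Local Notation histT := (g_sigma_algebraType (@coord_sets _ V)).

Definition cylinder (n : nat) (B : nat -> set V) : set (nat -> V) :=
  [set w | forall s, (s < n)%N -> B s (w s)].

Definition cylinders : set (set (nat -> V)) :=
  [set C | exists n B, (forall s, measurable (B s)) /\ C = cylinder n B].

Lemma measurable_cylinder n B : (forall s, measurable (B s)) ->
  (measurable : set (set histT)) (cylinder n B).
Proof.
move=> mB; elim: n => [|n IHn].
  by rewrite (_ : cylinder 0 B = setT) //; apply/seteqP; split.
rewrite (_ : cylinder n.+1 B = cylinder n B `&` ((fun w => w n) @^-1` B n)).
  by apply: measurableI => //; apply: sub_sigma_algebra; exists n, (B n).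
apply/seteqP; split => w /=.
  by move=> Bw; split => [s sn|]; apply: Bw; rewrite // ltnS ltnW.
by move=> [Bw Bwn] s; rewrite ltnS leq_eqVlt => /predU1P[->|/Bw].
Qed.

Lemma cylinders_generate : (measurable : set (set histT)) = <<s cylinders>>.
Proof.
apply/seteqP; split => A mA.
- apply: (smallest_sub _ _ mA); first exact: smallest_sigma_algebra.
  move=> _ [s [A' [mA' ->]]]; apply: sub_sigma_algebra.
  exists s.+1, (fun k => if k == s then A' else setT); split.
    by move=> k; case: ifP.
  apply/seteqP; split => w /=; first by move=> A'ws k _; case: eqP => [->|].
  by move=> /(_ s (ltnSn s)); rewrite eqxx.
- apply: (smallest_sub _ _ mA); first exact: sigma_algebra_measurable.
  by move=> _ [n [B [mB ->]]]; exact: measurable_cylinder.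
Qed.

(* Pad both cylinders to the longer length. *)
Lemma setI_closed_cylinders : setI_closed cylinders.
Proof.
move=> _ _ [n1 [B1 [mB1 ->]]] [n2 [B2 [mB2 ->]]].
exists (maxn n1 n2), (fun s => (if (s < n1)%N then B1 s else setT) `&`
  (if (s < n2)%N then B2 s else setT)); split.
  by move=> s; apply: measurableI; case: ifP.
apply/seteqP; split => w /=.
  by move=> [Bw1 Bw2] s _; split; case: ifP => // sn; [exact: Bw1|exact: Bw2].
move=> Bw; split => s sn.
  by have /Bw := leq_trans sn (leq_maxl n1 n2); rewrite sn => -[].
by have /Bw := leq_trans sn (leq_maxr n1 n2); rewrite sn => -[].
Qed.

Lemma hist_measurable_fun {R : realType} {F : (nat -> V) -> R} :
  hist_measurable F -> measurable_fun (setT : set histT) F.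
Proof. by move=> mF _ B mB; rewrite setTI; exact: mF. Qed.

Lemma hist_measurable_comp {R : realType} {dW : measure_display}
    {W : measurableType dW} {f : W -> V} {F : (nat -> V) -> R} :
  measurable_fun setT f -> hist_measurable F ->
  hist_measurable (fun w : nat -> W => F (f \o w)).
Proof.
move=> mf mF B mB.
have mcomp : measurable_fun (setT : set (g_sigma_algebraType (@coord_sets _ W)))
    (fun w : nat -> W => (f \o w : histT)).
  apply: (@measurability _ _ _ histT _ _ (@coord_sets _ V)) => //.
  move=> _ [_ [s [A [mA ->]]] <-]; rewrite setTI; apply: sub_sigma_algebra.
  by exists s, (f @^-1` A); split => //; rewrite -[_ @^-1` A]setTI; exact: mf.
by have := mcomp measurableT _ (mF B mB); rewrite setTI.
Qed.

Context {dO : measure_display} {Omega : measurableType dO}.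

Lemma measurable_hist (Z : int -> Omega -> V) t :
  (forall t, measurable_fun setT (Z t)) ->
  measurable_fun setT (hist Z t : Omega -> histT).
Proof.
move=> mZ; apply: (@measurability _ _ Omega histT _ _ (@coord_sets _ V)) => //.
by move=> _ [_ [s [A [mA ->]]] <-]; exact: mZ.
Qed.

Lemma measurable_hist' (Z : int -> Omega -> V) (Z0 : Omega -> V) t :
  (forall t, measurable_fun setT (Z t)) -> measurable_fun setT Z0 ->
  measurable_fun setT (hist' Z Z0 t : Omega -> histT).
Proof.
move=> mZ mZ0; apply: (@measurability _ _ Omega histT _ _ (@coord_sets _ V)) => //.
move=> _ [_ [s [A [mA ->]]] <-].
rewrite (_ : hist' Z Z0 t @^-1` _ =
    (if t - s%:Z == 0 then Z0 else Z (t - s%:Z)) @^-1` A); last first.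
  by apply/seteqP; split => x; rewrite /= /hist'; case: ifP.
by case: ifP => _; [exact: mZ0|exact: mZ].
Qed.

End history_space.

Section independence.
Context {R : realType} {dO dU : measure_display} {Omega : measurableType dO}
  {U : measurableType dU} {P : probability Omega R}.

Lemma mutually_independent_comp {I J : eqType} {f : J -> I} {g : I -> option J}
    {X : I -> Omega -> U} :
  pcancel f g -> mutually_independent P X -> mutually_independent P (X \o f).
Proof.
move=> fK [mX indX]; split => [j|s B us mB]; first exact: mX.
pose B' i := if g i is Some j then B j else setT.
have B'E j : B' (f j) = B j by rewrite /B' fK.
have -> : \big[setI/setT]_(j <- s) (X \o f) j @^-1` B j =
    \big[setI/setT]_(i <- map f s) X i @^-1` B' i.
  by rewrite big_map; apply: eq_bigr => j _; rewrite B'E.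
have -> : (\prod_(j <- s) P ((X \o f) j @^-1` B j) =
    \prod_(i <- map f s) P (X i @^-1` B' i))%E.
  by rewrite big_map; apply: eq_bigr => j _; rewrite B'E.
apply: indX; first by rewrite (map_inj_uniq (pcan_inj fK)).
by move=> i; rewrite /B'; case: (g i).
Qed.

Lemma identically_distributed_comp {I J : Type} (f : J -> I) {X : I -> Omega -> U} :
  identically_distributed P X -> identically_distributed P (X \o f).
Proof. by move=> idX i j; exact: idX. Qed.

End independence.

Section stationarity.
Context {R : realType} {dO dV : measure_display} {Omega : measurableType dO}
  {V : measurableType dV} {P : probability Omega R} {Z : int -> Omega -> V}.
Hypothesis indepZ : mutually_independent P Z.
Hypothesis identZ : identically_distributed P Z.
Local Notation histT := (g_sigma_algebraType (@coord_sets _ V)).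

Lemma prob_hist_cylinder t n B : (forall s, measurable (B s)) ->
  P (hist Z t @^-1` cylinder n B) = (\prod_(s <- iota 0 n) P (Z 0 @^-1` B s))%E.
Proof.
move=> mB.
have tK (s : nat) : t - (t - s%:Z) = s%:Z by rewrite opprB addrC subrK.
pose times := map (fun s : nat => t - s%:Z) (iota 0 n).
pose B' (i : int) := B `|t - i|%N.
have -> : hist Z t @^-1` cylinder n B = \big[setI/setT]_(i <- times) (Z i @^-1` B' i).
  rewrite -bigcap_seq; apply/seteqP; split => x /=.
    move=> Bx i /mapP [s]; rewrite mem_iota add0n => /andP[_ sn] ->.
    by rewrite /B' tK; exact: Bx.
  move=> Bx s sn; have := Bx (t - s%:Z); rewrite /B' tK; apply.
  by apply/mapP; exists s; rewrite // mem_iota add0n sn.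
rewrite indepZ.2; last 2 first.
- rewrite map_inj_uniq ?iota_uniq // => a b /(addrI t)/oppr_inj.
  by case.
- by move=> i; exact: mB.
by rewrite big_map; apply: eq_bigr => s _; rewrite /B' tK; exact: identZ.
Qed.

Definition hist_mfun t : {mfun Omega >-> histT} :=
  HB.pack (hist Z t : Omega -> histT)
    (isMeasurableFun.Build _ _ _ _ (hist Z t : Omega -> histT)
       (measurable_hist Z t indepZ.1)).

(* The laws agree on cylinders, a pi-system generating the product sigma-algebra. *)
Lemma distribution_hist_shift t A : measurable A ->
  distribution P (hist_mfun t) A = distribution P (hist_mfun 0) A.
Proof.
apply: (measure_unique _ (fun=> setT) cylinders_generate setI_closed_cylinders).
- by move=> _; exists 0%N, (fun=> setT); split => //; apply/seteqP; split.
- by apply/seteqP; split => // w _; exists 0%N.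
- move=> _ [n [B [mB ->]]].
  have cyl_t := prob_hist_cylinder t n B mB; have cyl_0 := prob_hist_cylinder 0 n B mB.
  exact: (etrans cyl_t (esym cyl_0)).
- move=> _; apply: le_lt_trans (probability_le1 _ measurableT) _.
  by rewrite ltry.
Qed.

Lemma Lnorm_hist_shift (F : (nat -> V) -> R) r t : hist_measurable F ->
  Lnorm P r%:E (EFin \o (fun w => F (hist Z t w))) =
  Lnorm P r%:E (EFin \o (fun w => F (hist Z 0 w))).
Proof.
move=> hF; rewrite unlock /=; congr (_ `^ _)%E.
have mF : @measurable_fun _ _ histT (\bar R) setT (fun v => ((`|F v| `^ r)%R)%:E).
  apply/measurable_EFinP; apply: (@measurableT_comp _ _ _ _ _ _ (@powR R ^~ r)) => //.
  by apply: measurableT_comp => //; exact: hist_measurable_fun.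
have F0 v : (0 <= ((`|F v| `^ r)%R)%:E)%E by rewrite lee_fin powR_ge0.
transitivity (\int[distribution P (hist_mfun t)]_v ((`|F v| `^ r)%R)%:E)%E.
  by rewrite ge0_integral_distribution.
rewrite (eq_measure_integral (distribution P (hist_mfun 0))); last first.
  by move=> A mA _; exact: distribution_hist_shift.
by rewrite ge0_integral_distribution.
Qed.

Lemma Lnorm_hist_bounded {F : (nat -> V) -> R} {r : R} : hist_measurable F ->
  (Lnorm P r%:E (EFin \o (fun w => F (hist Z 0 w))) < +oo)%E ->
  exists M : R, forall t,
    (Lnorm P r%:E (EFin \o (fun w => F (hist Z t w))) <= M%:E)%E.
Proof.
move=> hF Ffin; exists (fine (Lnorm P r%:E (EFin \o (fun w => F (hist Z 0 w))))).
by move=> t; rewrite Lnorm_hist_shift // fineK // ge0_fin_numE ?Lnorm_ge0.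
Qed.

End stationarity.

Section Lnorm_inequalities.
Context {R : realType} {d : measure_display} {T : measurableType d}.
Variable mu : {measure set T -> \bar R}.
Local Open Scope ereal_scope.

Lemma Lnorm_EFinE (p : R) (f : T -> R) :
  Lnorm mu p%:E (EFin \o f) = (\int[mu]_x ((`|f x| `^ p)%R)%:E) `^ p^-1.
Proof.
by rewrite unlock; congr (_ `^ _); apply: eq_integral => x _; rewrite /= poweR_EFin.
Qed.

Let integral_powR_ge0 (p : R) (f : T -> R) : 0 <= \int[mu]_x ((`|f x| `^ p)%R)%:E.
Proof. by apply: integral_ge0 => x _; rewrite lee_fin powR_ge0. Qed.

Let measurable_powR_norm (p : R) {f : T -> R} : measurable_fun setT f ->
  measurable_fun setT (fun x => (`|f x| `^ p)%R).
Proof.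
move=> mf; apply: (@measurableT_comp _ _ _ _ _ _ (@powR R ^~ p)) => //.
exact: measurableT_comp.
Qed.

(* Hoelder with exponents (2, 2) applied to |f|^p and |g|^p. *)
Lemma Lnorm_mulr_le (f g : T -> R) (p : R) :
  measurable_fun setT f -> measurable_fun setT g -> (0 < p)%R ->
  Lnorm mu p%:E (EFin \o (f \* g)%R) <=
  Lnorm mu (2 * p)%:E (EFin \o f) * Lnorm mu (2 * p)%:E (EFin \o g).
Proof.
move=> mf mg p0.
have half2 : (2^-1 + 2^-1 = 1 :> R)%R by rewrite [RHS]splitr mul1r.
have int_normK (h : T -> R) : \int[mu]_x ((Num.norm (`|h x| `^ p) `^ 2)%R)%:E =
    \int[mu]_x ((`|h x| `^ (2 * p))%R)%:E.
  by apply: eq_integral => x _; rewrite ger0_norm ?powR_ge0// -powRrM mulrC.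
have int_mulE : \int[mu]_x ((Num.norm (((fun x => `|f x| `^ p) \*
    (fun x => `|g x| `^ p))%R x) `^ 1)%R)%:E = \int[mu]_x ((`|(f \* g)%R x| `^ p)%R)%:E.
  apply: eq_integral => x _.
  by rewrite /= powRr1 // ger0_norm ?mulr_ge0 ?powR_ge0 // normrM powRM.
have := hoelder mu (measurable_powR_norm p mf) (measurable_powR_norm p mg)
  (ltr0Sn _ 1) (ltr0Sn _ 1) half2.
rewrite (Lnorm_EFinE 1) 2!(Lnorm_EFinE 2) invr1.
rewrite [X in X <= _]poweRe1; last exact: integral_powR_ge0.
rewrite [X in X <= _]int_mulE [X in _ <= X `^ _ * _]int_normK.
rewrite [X in _ <= _ * X `^ _]int_normK => hoelder_fg.
rewrite (Lnorm_EFinE p) 2!(Lnorm_EFinE (2 * p)) invfM.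
rewrite [X in _ <= X * _]poweRrM [X in _ <= _ * X]poweRrM -poweRM; last 2 first.
- exact: poweR_ge0.
- exact: poweR_ge0.
apply: (gt0_ler_poweR _ _ _ hoelder_fg).
- by rewrite invr_ge0 ltW.
- by rewrite in_itv /= leey andbT.
- by rewrite in_itv /= leey andbT mule_ge0 ?poweR_ge0.
Qed.

Lemma Lnorm_subr_le (p : R) (f g : T -> R) :
  measurable_fun setT f -> measurable_fun setT g -> (1 <= p)%R ->
  Lnorm mu p%:E (EFin \o (fun x => f x - g x)%R) <=
  Lnorm mu p%:E (EFin \o f) + Lnorm mu p%:E (EFin \o g).
Proof.
move=> mf mg p1.
have -> : Lnorm mu p%:E (EFin \o g) = Lnorm mu p%:E (EFin \o (fun x => - g x)%R).
  by rewrite -[RHS]oppe_Lnorm; apply: eq_Lnorm => x /=; rewrite opprK.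
apply: (@minkowski_EFin _ _ _ mu f (fun x => - g x)%R p mf _ p1).
exact: measurableT_comp.
Qed.

Lemma Lnorm_mulr_subr_le (p : R) (u1 u2 v1 v2 : T -> R) :
  measurable_fun setT u1 -> measurable_fun setT u2 ->
  measurable_fun setT v1 -> measurable_fun setT v2 -> (1 <= p)%R ->
  Lnorm mu p%:E (EFin \o (fun x => u1 x * v1 x - u2 x * v2 x)%R) <=
  Lnorm mu (2 * p)%:E (EFin \o (fun x => u1 x - u2 x)%R) *
    Lnorm mu (2 * p)%:E (EFin \o v1) +
  Lnorm mu (2 * p)%:E (EFin \o u2) *
    Lnorm mu (2 * p)%:E (EFin \o (fun x => v1 x - v2 x)%R).
Proof.
move=> mu1 mu2 mv1 mv2 p1.
have p0 : (0 < p)%R by rewrite (lt_le_trans ltr01).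
rewrite (eq_Lnorm _ _ (g := EFin \o
  (fun x => (u1 x - u2 x) * v1 x + u2 x * (v1 x - v2 x))%R)); last first.
  by move=> x /=; congr EFin; ring.
apply: le_trans (minkowski_EFin _ _ _ p1) _.
- by apply: measurable_funM => //; exact: measurable_funB.
- by apply: measurable_funM => //; exact: measurable_funB.
by apply: leeD; apply: Lnorm_mulr_le => //; exact: measurable_funB.
Qed.

End Lnorm_inequalities.

(* Hoelder with exponents (q / r, its conjugate) applied to |f|^r and 1. *)
Lemma Lnorm_le_exponent {R : realType} {d : measure_display} {T : measurableType d}
    (P : probability T R) (f : T -> R) (r q : R) :
  measurable_fun setT f -> 0 < r -> r <= q ->
  (Lnorm P r%:E (EFin \o f) <= Lnorm P q%:E (EFin \o f))%E.
Proof.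
move=> mf r0; rewrite le_eqVlt => /predU1P[<-//|rq].
have q0 : 0 < q by rewrite (lt_trans r0).
pose a := q / r; pose b := (1 - a^-1)^-1.
have a1 : 1 < a by rewrite /a ltr_pdivlMr// mul1r.
have a0 : 0 < a by rewrite (lt_trans ltr01).
have b0 : 0 < b by rewrite /b invr_gt0 subr_gt0 invf_lt1.
have ab : a^-1 + b^-1 = 1 by rewrite /b invrK addrC subrK.
have mfr : measurable_fun setT (fun x => `|f x| `^ r).
  apply: (@measurableT_comp _ _ _ _ _ _ (@powR R ^~ r)) => //.
  exact: measurableT_comp.
have int_F1 : (\int[P]_x ((Num.norm (((fun x => `|f x| `^ r) \* cst 1) x) `^ 1))%:E =
    \int[P]_x (`|f x| `^ r)%:E)%E.
  by apply: eq_integral => x _; rewrite /= mulr1 powRr1 ?normr_ge0 // ger0_norm ?powR_ge0.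
have int_Fa : (\int[P]_x ((Num.norm (`|f x| `^ r) `^ a))%:E =
    \int[P]_x (`|f x| `^ q)%:E)%E.
  apply: eq_integral => x _.
  by rewrite ger0_norm ?powR_ge0 // -powRrM /a mulrC divfK ?gt_eqF.
have := hoelder P mfr (measurable_cst (1 : R)) a0 b0 ab.
have PT1 : (P : {measure set T -> \bar R}) setT = 1%E := probability_setT P.
rewrite Lnorm_cst1 PT1 poweR1r mule1 (Lnorm_EFinE P 1) (Lnorm_EFinE P a) invr1.
rewrite [X in (X <= _)%E]poweRe1; last first.
  by apply: integral_ge0 => x _; rewrite lee_fin powR_ge0.
rewrite [X in (X <= _)%E]int_F1 [X in (_ <= X `^ _)%E]int_Fa => hoelder_f.
rewrite (Lnorm_EFinE P r) (Lnorm_EFinE P q) (_ : q^-1 = a^-1 * r^-1); last first.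
  by rewrite /a invf_div mulrAC mulfV ?mul1r // gt_eqF.
rewrite [X in (_ <= X)%E]poweRrM; apply: (gt0_ler_poweR _ _ _ hoelder_f).
- by rewrite invr_ge0 ltW.
- by rewrite in_itv /= leey andbT; apply: integral_ge0 => x _; rewrite lee_fin powR_ge0.
- by rewrite in_itv /= leey andbT poweR_ge0.
Qed.

Section tail_bigO.
Context {R : realType}.
Local Notation rate b := (fun t : nat => (t%:R : R) `^ (- b)).
Implicit Types (D E : nat -> \bar R) (r : nat -> R).

Lemma tail_bigO_ge0_constant {D r} : (forall t, 0 <= r t) -> tail_bigO D r ->
  exists C N, 0 <= C /\ forall t, (N <= t)%N ->
    (\sum_(t <= s <oo) D s <= (C * r t)%:E)%E.
Proof.
move=> r0 [C [N DC]]; exists (Num.max C 0), N; split; first by rewrite le_max lexx orbT.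
move=> t Nt; apply: le_trans (DC t Nt) _; rewrite lee_fin ler_wpM2r //.
by rewrite le_max lexx.
Qed.

Lemma tail_bigO_add {D E r} : (forall t, 0 <= r t) ->
  (forall s, (0 <= D s)%E) -> (forall s, (0 <= E s)%E) ->
  tail_bigO D r -> tail_bigO E r -> tail_bigO (fun s => D s + E s)%E r.
Proof.
move=> r0 D0 E0 [C1 [N1 DC1]] [C2 [N2 EC2]].
exists (C1 + C2), (maxn N1 N2) => t Nt.
rewrite nneseriesD // mulrDl EFinD; apply: leeD.
  by apply: DC1; apply: leq_trans Nt; exact: leq_maxl.
by apply: EC2; apply: leq_trans Nt; exact: leq_maxr.
Qed.

Lemma tail_bigO_scale D r (K : R) : 0 <= K ->
  (forall s, (0 <= D s)%E) -> tail_bigO D r -> tail_bigO (fun s => K%:E * D s)%E r.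
Proof.
move=> K0 D0 [C [N DC]]; exists (K * C), N => t Nt.
rewrite nneseriesZl // -mulrA EFinM; apply: lee_pmul => //; first exact: nneseries_ge0.
exact: DC.
Qed.

Lemma tail_bigO_le_eventually E D r N0 : (forall s, (0 <= E s)%E) ->
  (forall s, (0 <= D s)%E) -> (forall s, (N0 <= s)%N -> (E s <= D s)%E) ->
  tail_bigO D r -> tail_bigO E r.
Proof.
move=> E0 D0 ED [C [N DC]]; exists C, (maxn N N0) => t Nt.
rewrite -nneseries_addn //.
apply: le_trans (DC t (leq_trans (leq_maxl _ _) Nt)).
rewrite -[X in (_ <= X)%E]nneseries_addn //.
apply: lee_nneseries => i _ //; apply: ED.
by apply: leq_trans (leq_trans (leq_maxr N N0) Nt) _; exact: leq_addl.
Qed.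

Lemma powRN_le_succ (b : R) (t : nat) : 0 <= b <= 1 -> (1 <= t)%N ->
  (t%:R : R) `^ (- b) <= 2 * (t.+1%:R) `^ (- b).
Proof.
move=> /andP[b0 b1] t1.
rewrite !powRN -[X in _ <= X]invf_div lef_pV2 ?posrE ?divr_gt0 ?powR_gt0 ?ltr0n //.
rewrite ler_pdivrMr // mulrC.
apply: (@le_trans _ _ ((2 * t%:R) `^ b)).
  apply: ge0_ler_powR; rewrite ?nnegrE ?mulr_ge0 ?ler0n //.
  by rewrite -natrM ler_nat mul2n -addnn -addn1 leq_add2l.
rewrite powRM ?ler0n // ler_wpM2r ?powR_ge0 //.
by have := @ler1_powR R 2 b; rewrite ler1n => /(_ isT b1).
Qed.

Lemma nneseries_shift_pred D t : (forall s, (0 <= D s)%E) ->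
  (\sum_(t.+1 <= s <oo) D s.-1 = \sum_(t <= s <oo) D s)%E.
Proof.
move=> D0; rewrite -nneseries_addn // -[RHS]nneseries_addn //.
by apply: eq_eseriesr => i _; rewrite addnS.
Qed.

Lemma tail_bigO_shift_pred D (b : R) : (forall s, (0 <= D s)%E) ->
  0 <= b <= 1 -> tail_bigO D (rate b) -> tail_bigO (fun s => D s.-1) (rate b).
Proof.
move=> D0 b01 /(tail_bigO_ge0_constant (fun t => powR_ge0 _ _)) [C [N [C0 DC]]].
exists (C * 2), N.+2 => -[//|t] Nt.
rewrite nneseries_shift_pred //; apply: le_trans (DC t (ltnW Nt)) _.
rewrite lee_fin -mulrA ler_wpM2l //; apply: powRN_le_succ => //.
exact: leq_trans (ltn0Sn N) Nt.
Qed.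

Lemma tail_bigO_add_pred D (b : R) : (forall s, (0 <= D s)%E) ->
  0 <= b <= 1 -> tail_bigO D (rate b) -> tail_bigO (fun s => D s + D s.-1)%E (rate b).
Proof.
move=> D0 b01 DC.
apply: (tail_bigO_add (fun t => powR_ge0 _ _) D0 (fun s => D0 s.-1) DC).
exact: tail_bigO_shift_pred.
Qed.

Lemma tail_bigO_powRN_le {D} {a b : R} : b <= a ->
  tail_bigO D (rate a) -> tail_bigO D (rate b).
Proof.
move=> ba /(tail_bigO_ge0_constant (fun t => powR_ge0 _ _)) [C [N [C0 DC]]].
exists C, N.+1 => t Nt; apply: le_trans (DC t (ltnW Nt)) _.
rewrite lee_fin ler_wpM2l //; apply: ler_powR; last by rewrite lerN2.
by rewrite ler1n; apply: leq_trans Nt.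
Qed.

Lemma ln_powRN_le_ln2 (A : R) (t : nat) : 0 <= A -> (2 <= t)%N ->
  (ln (t%:R : R)) `^ (- A) <= (ln 2) `^ (- A).
Proof.
move=> A0 t2.
have ln2_gt0 : 0 < ln (2 : R) by rewrite ln_gt0 // ltr1n.
have ln2_le : ln (2 : R) <= ln t%:R.
  by rewrite ler_ln ?posrE ?ltr0n ?ler_nat // (leq_trans _ t2).
have lnt_gt0 : 0 < ln (t%:R : R) by apply: lt_le_trans ln2_le.
rewrite !powRN lef_pV2 ?posrE ?powR_gt0 //.
by apply: ge0_ler_powR => //; rewrite nnegrE ltW.
Qed.

Lemma tail_bigO_powRN_ln {D} {g A b : R} : b <= g -> 0 <= A ->
  tail_bigO D (fun t => (t%:R : R) `^ (- g) * (ln (t%:R : R)) `^ (- A)) ->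
  tail_bigO D (rate b).
Proof.
move=> bg A0 [C [N DC]].
exists (Num.max C 0 * (ln 2) `^ (- A)), (maxn N 2) => t Nt.
apply: le_trans (DC t (leq_trans (leq_maxl _ _) Nt)) _.
have t2 : (2 <= t)%N by apply: leq_trans (leq_maxr _ _) Nt.
rewrite lee_fin.
apply: (@le_trans _ _ (Num.max C 0 * ((t%:R : R) `^ (- g) * (ln (t%:R : R)) `^ (- A)))).
  by rewrite ler_wpM2r ?mulr_ge0 ?powR_ge0 // le_max lexx.
rewrite -mulrA ler_wpM2l ?le_max ?lexx ?orbT // mulrC.
apply: ler_pM; rewrite ?powR_ge0 //; first exact: ln_powRN_le_ln2.
apply: ler_powR; last by rewrite lerN2.
by rewrite ler1n (leq_trans _ t2).
Qed.

End tail_bigO.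

Lemma nneseries_term_le {R : realType} (D : nat -> \bar R) s : (forall i, 0 <= D i)%E ->
  (D s <= \sum_(0 <= i <oo) D i)%E.
Proof.
move=> D0; apply: le_trans (nneseries_lim_ge s.+1 (fun n _ _ => D0 n)).
by rewrite big_nat_recr //=; apply: leeDr; apply: sume_ge0 => i _.
Qed.

Definition increment {V : Type} {R : realType} (F : (nat -> V) -> R) (v : nat -> V) : R :=
  F v - F (hshift v).

Section coupling.
Context {R : realType} {dO dU : measure_display} {Omega : measurableType dO}
  {U : measurableType dU} {P : probability Omega R}
  {zeta : int -> Omega -> U} {zeta0' : Omega -> U}.
Hypothesis mzeta : forall t, measurable_fun setT (zeta t).
Hypothesis mzeta0' : measurable_fun setT zeta0'.
Local Notation delta := (physdep P zeta zeta0').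
Local Notation Lnorm_ r f := (Lnorm P r%:E (EFin \o f)).
Local Open Scope ereal_scope.

Lemma hshift_hist (n : nat) w : hshift (hist zeta n.+1%:Z w) = hist zeta n%:Z w.
Proof. by apply/funext => k; rewrite /hshift /hist !intS opprD addrACA subrr add0r. Qed.

Lemma hshift_hist' (n : nat) w :
  hshift (hist' zeta zeta0' n.+1%:Z w) = hist' zeta zeta0' n%:Z w.
Proof. by apply/funext => k; rewrite /hshift /hist' !intS opprD addrACA subrr add0r. Qed.

Let measurable_hist_comp (F : (nat -> U) -> R) t : hist_measurable F ->
  measurable_fun setT (fun w => F (hist zeta t w)).
Proof.
by move=> hF; exact (measurableT_comp (hist_measurable_fun hF)
  (measurable_hist zeta t mzeta)).
Qed.

Let measurable_hist'_comp (F : (nat -> U) -> R) t : hist_measurable F ->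
  measurable_fun setT (fun w => F (hist' zeta zeta0' t w)).
Proof.
by move=> hF; exact (measurableT_comp (hist_measurable_fun hF)
  (measurable_hist' zeta zeta0' t mzeta mzeta0')).
Qed.

Let measurable_increment_hist (F : (nat -> U) -> R) (n : nat) : hist_measurable F ->
  measurable_fun setT (fun w => increment F (hist zeta n.+1%:Z w)).
Proof.
move=> hF; rewrite /increment; under eq_fun do rewrite hshift_hist.
by apply: measurable_funB; exact: measurable_hist_comp.
Qed.

Let measurable_increment_hist' (F : (nat -> U) -> R) (n : nat) : hist_measurable F ->
  measurable_fun setT (fun w => increment F (hist' zeta zeta0' n.+1%:Z w)).
Proof.
move=> hF; rewrite /increment; under eq_fun do rewrite hshift_hist'.
by apply: measurable_funB; exact: measurable_hist'_comp.
Qed.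

Section increment_bounds.
Variables (F : (nat -> U) -> R) (Q r M S : R).
Hypothesis hF : hist_measurable F.
Hypothesis r1 : (1 <= r)%R.
Hypothesis rQ : (r <= Q)%R.
Hypothesis FM : forall t, Lnorm_ Q (fun w => F (hist zeta t w)) <= M%:E.
Hypothesis deltaS : forall s, delta Q F s <= S%:E.

Let r0 : (0 < r)%R. Proof. by rewrite (lt_le_trans ltr01). Qed.

Let mF t : measurable_fun setT (fun w => F (hist zeta t w)).
Proof. exact: measurable_hist_comp. Qed.

Let Lnorm_le_delta s :
  Lnorm_ r (fun w => F (hist zeta s%:Z w) - F (hist' zeta zeta0' s%:Z w))%R <= delta Q F s.
Proof.
apply: Lnorm_le_exponent r0 rQ; apply: measurable_funB; first exact: mF.
exact: measurable_hist'_comp.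
Qed.

Lemma Lnorm_increment_coupling_le (n : nat) :
  Lnorm_ r (fun w => increment F (hist zeta n.+1%:Z w) -
                     increment F (hist' zeta zeta0' n.+1%:Z w))%R <=
  delta Q F n.+1 + delta Q F n.
Proof.
rewrite (eq_Lnorm _ _ (g := EFin \o (fun w =>
   (F (hist zeta n.+1%:Z w) - F (hist' zeta zeta0' n.+1%:Z w)) -
   (F (hist zeta n%:Z w) - F (hist' zeta zeta0' n%:Z w)))%R)); last first.
  by move=> w /=; rewrite /increment hshift_hist hshift_hist'; congr EFin; ring.
apply: le_trans (Lnorm_subr_le P r _ _ _ _ r1) _.
- by apply: measurable_funB; [exact: mF|exact: measurable_hist'_comp].
- by apply: measurable_funB; [exact: mF|exact: measurable_hist'_comp].
exact: leeD.
Qed.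

Lemma Lnorm_increment_le (n : nat) :
  Lnorm_ r (fun w => increment F (hist zeta n.+1%:Z w)) <= (M + M)%:E.
Proof.
rewrite /increment; under eq_Lnorm do rewrite /= hshift_hist.
apply: le_trans (Lnorm_subr_le P r _ _ _ _ r1) _ => //.
by rewrite EFinD; apply: leeD; apply: le_trans (FM _);
  exact: Lnorm_le_exponent (mF _) r0 rQ.
Qed.

(* No stationarity of the coupled history is needed: compare it with the original one. *)
Lemma Lnorm_increment'_le (n : nat) :
  Lnorm_ r (fun w => increment F (hist' zeta zeta0' n.+1%:Z w)) <= (M + M + (S + S))%:E.
Proof.
rewrite (eq_Lnorm _ _ (g := EFin \o (fun w => increment F (hist zeta n.+1%:Z w) -
   (increment F (hist zeta n.+1%:Z w) - increment F (hist' zeta zeta0' n.+1%:Z w)))%R));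
  last by move=> w /=; congr EFin; ring.
apply: le_trans (Lnorm_subr_le P r _ _ _ _ r1) _.
- exact: measurable_increment_hist.
- by apply: measurable_funB;
    [exact: measurable_increment_hist|exact: measurable_increment_hist'].
rewrite EFinD; apply: leeD; first exact: Lnorm_increment_le.
by apply: le_trans (Lnorm_increment_coupling_le n) _; rewrite EFinD; exact: leeD.
Qed.

End increment_bounds.

Lemma physdep_increment_mul_le (p Q1 Q2 M1 M2 S1 : R) (F1 F2 : (nat -> U) -> R) (n : nat) :
  (1 <= p)%R -> (2 * p <= Q1)%R -> (2 * p <= Q2)%R ->
  hist_measurable F1 -> hist_measurable F2 ->
  (forall t, Lnorm_ Q1 (fun w => F1 (hist zeta t w)) <= M1%:E) ->
  (forall t, Lnorm_ Q2 (fun w => F2 (hist zeta t w)) <= M2%:E) ->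
  (forall s, delta Q1 F1 s <= S1%:E) ->
  delta p (fun v => increment F1 v * increment F2 v)%R n.+1 <=
  (M2 + M2)%:E * (delta Q1 F1 n.+1 + delta Q1 F1 n) +
  (M1 + M1 + (S1 + S1))%:E * (delta Q2 F2 n.+1 + delta Q2 F2 n).
Proof.
move=> p1 pQ1 pQ2 hF1 hF2 F1M F2M delta1S.
have p2 : (1 <= 2 * p)%R by lra.
apply: le_trans (Lnorm_mulr_subr_le P p _ _ _ _ _ _ _ _ p1) _.
- exact: measurable_increment_hist.
- exact: measurable_increment_hist'.
- exact: measurable_increment_hist.
- exact: measurable_increment_hist'.
apply: leeD.
- rewrite muleC; apply: lee_pmul; try exact: Lnorm_ge0.
  + exact: Lnorm_increment_le F2M _.
  + exact: Lnorm_increment_coupling_le.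
- apply: lee_pmul; try exact: Lnorm_ge0.
  + exact: Lnorm_increment'_le F1M delta1S _.
  + exact: Lnorm_increment_coupling_le.
Qed.

Lemma tail_bigO_physdep_increment_mul {p Q1 Q2 b : R} {F1 F2 : (nat -> U) -> R} :
  (1 <= p)%R -> (2 * p <= Q1)%R -> (2 * p <= Q2)%R -> (0 <= b <= 1)%R ->
  hist_measurable F1 -> hist_measurable F2 ->
  (exists M1 : R, forall t, Lnorm_ Q1 (fun w => F1 (hist zeta t w)) <= M1%:E) ->
  (exists M2 : R, forall t, Lnorm_ Q2 (fun w => F2 (hist zeta t w)) <= M2%:E) ->
  \sum_(0 <= s <oo) delta Q1 F1 s < +oo ->
  tail_bigO (delta Q1 F1) (fun t => (t%:R `^ (- b))%R) ->
  tail_bigO (delta Q2 F2) (fun t => (t%:R `^ (- b))%R) ->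
  tail_bigO (delta p (fun v => increment F1 v * increment F2 v)%R)
    (fun t => (t%:R `^ (- b))%R).
Proof.
move=> p1 pQ1 pQ2 b01 hF1 hF2 [M1 F1M] [M2 F2M] sum1_fin tail1 tail2.
have delta_ge0 r F s : 0 <= delta r F s by exact: Lnorm_ge0.
have M1_ge0 : (0 <= M1)%R by rewrite -lee_fin (le_trans (Lnorm_ge0 _ _ _) (F1M 0%R)).
have M2_ge0 : (0 <= M2)%R by rewrite -lee_fin (le_trans (Lnorm_ge0 _ _ _) (F2M 0%R)).
pose S1 := fine (\sum_(0 <= s <oo) delta Q1 F1 s).
have S1_ge0 : (0 <= S1)%R by apply: fine_ge0; exact: nneseries_ge0.
have delta1S s : delta Q1 F1 s <= S1%:E.
  by rewrite fineK ?ge0_fin_numE ?nneseries_ge0 //; exact: nneseries_term_le.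
pose D s := (M2 + M2)%:E * (delta Q1 F1 s + delta Q1 F1 s.-1) +
  (M1 + M1 + (S1 + S1))%:E * (delta Q2 F2 s + delta Q2 F2 s.-1).
apply: (tail_bigO_le_eventually _ D _ 1) => [s|s|[//|n] _|].
- exact: delta_ge0.
- by apply: adde_ge0; apply: mule_ge0; rewrite ?lee_fin ?addr_ge0 ?adde_ge0.
- exact: physdep_increment_mul_le F1M F2M delta1S.
apply: tail_bigO_add => [t|s|s||]; first exact: powR_ge0.
- by apply: mule_ge0; rewrite ?lee_fin ?addr_ge0 ?adde_ge0.
- by apply: mule_ge0; rewrite ?lee_fin ?addr_ge0 ?adde_ge0.
- apply: tail_bigO_scale; last exact: tail_bigO_add_pred.
  + by rewrite !addr_ge0.
  + by move=> s; rewrite adde_ge0.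
- apply: tail_bigO_scale; last exact: tail_bigO_add_pred.
  + by rewrite !addr_ge0.
  + by move=> s; rewrite adde_ge0.
Qed.

End coupling.

Lemma half_le_gamma {R : realType} (q : R) : 4 < q ->
  1 / 2 <= (q ^+ 2 - 4 + (q - 2) * Num.sqrt (q ^+ 2 + 20 * q + 4)) / (8 * q).
Proof.
move=> q4; rewrite ler_pdivlMr ?mulr_gt0 //; last lra.
have sqrt_ge0 := sqrtr_ge0 (q ^+ 2 + 20 * q + 4).
have sqrtK : Num.sqrt (q ^+ 2 + 20 * q + 4) ^+ 2 = q ^+ 2 + 20 * q + 4.
  by rewrite sqr_sqrtr //; nra.
have q_le_sqrt : q <= Num.sqrt (q ^+ 2 + 20 * q + 4) by nra.
nra.
Qed.

Lemma half_sub_inv_lt_min {R : realType} (alpha q' p : R) : 0 < p -> 2 * p <= q' ->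
  1 / 2 - q'^-1 < alpha -> 1 / 2 - p^-1 < Num.min alpha (1 / 2).
Proof.
move=> p0 pq' alpha_gt.
have pV_gt0 : 0 < p^-1 by rewrite invr_gt0.
have : q'^-1 <= (2 * p)^-1 by rewrite lef_pV2 ?posrE //; lra.
rewrite invfM => q'V_le.
rewrite lt_min; apply/andP; split; lra.
Qed.

Lemma min_half_in01 {R : realType} (alpha q' : R) : 4 < q' ->
  1 / 2 - q'^-1 < alpha -> 0 <= Num.min alpha (1 / 2) <= 1.
Proof.
move=> q'4 alpha_gt; have : q'^-1 < 4^-1 by rewrite ltf_pV2 ?posrE //; lra.
move=> q'V_lt; apply/andP; split; first by rewrite le_min; apply/andP; split; lra.
by rewrite ge_min; apply/orP; right; lra.
Qed.

Theorem lemmaA2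
  (R : realType) (dO : measure_display) (Omega : measurableType dO)
  (P : probability Omega R)
  (dU dE dX : measure_display) (U : measurableType dU)
  (Teta : measurableType dE) (Txi : measurableType dX) (d : nat)
  (* joint innovations zeta_t = (eta_t, xi_{t,1}, ..., xi_{t,d}) and copy zeta0' *)
  (zeta : int -> Omega -> U) (zeta0' : Omega -> U)
  (peta : U -> Teta) (pxi : 'I_d -> U -> Txi)
  (g : (nat -> Teta) -> R) (h : 'I_d -> (nat -> Txi) -> R)
  (q q' theta gamma A alpha C : R) :
  measurable_fun setT peta -> (forall j, measurable_fun setT (pxi j)) ->
  mutually_independent P (fun o : option int =>
     match o with Some t => zeta t | None => zeta0' end) ->
  identically_distributed P (fun o : option int =>
     match o with Some t => zeta t | None => zeta0' end) ->
  let eps (t : int) := fun w => g (peta \o hist zeta t w) in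
  let X (j : 'I_d) (t : int) := fun w => h j (pxi j \o hist zeta t w) in
  let G_eps (v : nat -> U) := g (peta \o v) in
  let G_X (j : 'I_d) (v : nat -> U) := h j (pxi j \o v) in
  (* (C1) *)
  hist_measurable g -> 4 < q ->
  (forall t, ('E_P[eps t] = 0)%E) ->
  (forall t, (Lnorm P q%:E (EFin \o eps t) <= C%:E)%E) ->
  (* (C3) *)
  gamma = (q ^+ 2 - 4 + (q - 2) * Num.sqrt (q ^+ 2 + 20 * q + 4)) / (8 * q) ->
  A > 2 / 3 * (q^-1 + 1 + gamma) ->
  (\sum_(0 <= s <oo) physdep P zeta zeta0' q G_eps s < +oo)%E ->
  tail_bigO (physdep P zeta zeta0' q G_eps)
    (fun t => t%:R `^ (- gamma) * (ln t%:R) `^ (- A)) ->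
  (* (C4) *)
  (forall j, hist_measurable (h j)) -> 0 < theta -> Num.max 4 (theta * q) < q' ->
  (forall j t, ('E_P[X j t] = 0)%E) ->
  (forall j t, (Lnorm P q'%:E (EFin \o X j t) < +oo)%E) ->
  (* (C6) *)
  (forall j, (\sum_(0 <= s <oo) physdep P zeta zeta0' q' (G_X j) s < +oo)%E) ->
  alpha > 1 / 2 - q'^-1 ->
  (forall j, tail_bigO (physdep P zeta zeta0' q' (G_X j)) (fun t => t%:R `^ (- alpha))) ->
  (* a_{ij}(H_t) = dX_{t,j} * d eps_t,  b_{ikl}(G_t) = dX_{t,k} * dX_{t,l} *)
  let a (j : 'I_d) (v : nat -> U) :=
    (G_X j v - G_X j (hshift v)) * (G_eps v - G_eps (hshift v)) in
  let b (k l : 'I_d) (v : nat -> U) :=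
    (G_X k v - G_X k (hshift v)) * (G_X l v - G_X l (hshift v)) in
  forall j k l : 'I_d,
    (let p := Num.min q q' / 2 in
     exists alpha1, alpha1 > 1 / 2 - p^-1 /\
       tail_bigO (physdep P zeta zeta0' p (a j)) (fun t => t%:R `^ (- alpha1)))
    /\
    (let p := q' / 2 in
     exists alpha2, alpha2 > 1 / 2 - p^-1 /\
       tail_bigO (physdep P zeta zeta0' p (b k l)) (fun t => t%:R `^ (- alpha2))).
Proof.
move=> mpeta mpxi indep ident eps X G_eps G_X hg q4 _ epsC gammaE Agt _ tail_eps
  hh _ q'_gt _ XL sum_X alpha_gt tail_X a b j k l.
have indep_zeta : mutually_independent P zeta :=
  mutually_independent_comp (f := Some) (g := id) (fun=> erefl) indep.
have ident_zeta : identically_distributed P zeta := identically_distributed_comp Some ident.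
have mzeta0' : measurable_fun setT zeta0' := indep.1 None.
have hG_eps : hist_measurable G_eps := hist_measurable_comp mpeta hg.
have hG_X j' : hist_measurable (G_X j') := hist_measurable_comp (mpxi j') (hh j').
have X_moments j' := Lnorm_hist_bounded indep_zeta ident_zeta (hG_X j') (XL j' 0).
have q'4 : 4 < q' by apply: le_lt_trans q'_gt; rewrite le_max lexx.
have gamma_ge : 1 / 2 <= gamma by rewrite gammaE; exact: half_le_gamma.
have qV_gt0 : 0 < q^-1 by rewrite invr_gt0; lra.
have A_ge0 : 0 <= A by lra.
pose a1 := Num.min alpha (1 / 2).
have a1_01 : 0 <= a1 <= 1 by exact: min_half_in01 q'4 alpha_gt.
have a1_le_alpha : a1 <= alpha by rewrite ge_min lexx.
have a1_le_gamma : a1 <= gamma by rewrite ge_min gamma_ge orbT.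
have tail_eps1 := tail_bigO_powRN_ln a1_le_gamma A_ge0 tail_eps.
have tail_X1 j' := tail_bigO_powRN_le a1_le_alpha (tail_X j').
have m_gt4 : 4 < Num.min q q' by rewrite lt_min q4 q'4.
have m_le_q : Num.min q q' <= q by rewrite ge_min lexx.
have m_le_q' : Num.min q q' <= q' by rewrite ge_min lexx orbT.
split; exists a1; split.
- by apply: half_sub_inv_lt_min alpha_gt; lra.
- apply: (tail_bigO_physdep_increment_mul indep_zeta.1 mzeta0' _ _ _ a1_01 (hG_X j) hG_eps
    (X_moments j) _ (sum_X j) (tail_X1 j) tail_eps1); [lra|lra|lra|by exists C].
- by apply: half_sub_inv_lt_min alpha_gt; lra.
- apply: (tail_bigO_physdep_increment_mul indep_zeta.1 mzeta0' _ _ _ a1_01 (hG_X k) (hG_X l)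
    (X_moments k) (X_moments l) (sum_X k) (tail_X1 k) (tail_X1 l)); lra.
Qed.
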